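(* Let $D$ be a non-principal ultrafilter on $\omega$, $\mathbb P$ a poset, and $Q\subseteq\mathbb P$ suff-$D$-lim-linked, witnessed by $\lim^D:Q^\omega\to\mathbb P$. Then $Q$ is $D$-lim-linked, witnessed by the same function $\lim^D$. In particular, every suff-uf-lim-linked subset of a poset is uf-lim-linked.
   Context: For $Q\subseteq\mathbb P$, an ultrafilter $D$ on $\omega$ and $\lim^D:Q^\omega\to\mathbb P$, condition $(\star)_n$ says: whenever $\bar q^j=\langle q^j_m:m<\omega\rangle\in Q^\omega$ for $j<n$ and $r\in\mathbb P$ satisfies $r\leq\lim^D\bar q^j$ for all $j<n$, then $\{m<\omega: r \text{ and all } q^j_m\ (j<n)\text{ have a common extension}\}\in D$. $Q$ is suff-$D$-lim-linked if some $\lim^D:Q^\omega\to\mathbb P$ satisfies $(\star)_n$ for all $n<\omega$; suff-uf-lim-linked if this holds for every non-principal ultrafilter $D$. $Q$ is $D$-lim-linked, witnessed by $\lim^D:Q^\omega\to\mathbb P$, if there is a $\mathbb P$-name $\dot D'$ of an ultrafilter on $\omega$ extending $D$ such that for every $\bar q=\langle q_m\rangle\in Q^\omega$, $\lim^D\bar q\Vdash_{\mathbb P}\{m:q_m\in\dot G\}\in\dot D'$; uf-lim-linked if it is $D$-lim-linked for every non-principal ultrafilter $D$. *)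

(* plain Prop-valued sets; forcing over an abstract poset
   rendered via its forcing relation on nice names. *)

Set Implicit Arguments.

Definition ultrafilter (D : (nat -> Prop) -> Prop) : Prop :=
  (forall A B : nat -> Prop, D A -> (forall m, A m -> B m) -> D B) /\
  (forall A B : nat -> Prop, D A -> D B -> D (fun m => A m /\ B m)) /\
  ~ D (fun _ => False) /\
  (forall A : nat -> Prop, D A \/ D (fun m => ~ A m)).

Definition nonprincipal (D : (nat -> Prop) -> Prop) : Prop :=
  forall n : nat, ~ D (fun m => m = n).

Definition is_poset (T : Type) (le : T -> T -> Prop) : Prop :=
  (forall p, le p p) /\
  (forall p q r, le p q -> le q r -> le p r) /\
  (forall p q, le p q -> le q p -> p = q).

Definition compat (T : Type) (le : T -> T -> Prop) (p q : T) : Prop :=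
  exists r, le r p /\ le r q.

Definition dense_below (T : Type) (le : T -> T -> Prop) (p : T) (X : T -> Prop) : Prop :=
  forall r, le r p -> exists s, le s r /\ X s.

(** ** Nice P-names for subsets of omega.
    A name [sigma] assigns to each [n] a set of conditions; its evaluation
    by a generic filter G is { n | G meets sigma n }. *)
Definition name (T : Type) := nat -> T -> Prop.

Definition forces_in (T : Type) (le : T -> T -> Prop) (p : T) (sigma : name T) (n : nat) : Prop :=
  dense_below le p (fun s => exists a, sigma n a /\ le s a).

Definition forces_sub (T : Type) (le : T -> T -> Prop) (p : T) (sigma tau : name T) : Prop :=
  forall n r, le r p -> forces_in le r sigma n -> forces_in le r tau n.

Definition forces_sub2 (T : Type) (le : T -> T -> Prop) (p : T) (sigma tau rho : name T) : Prop :=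
  forall n r, le r p -> forces_in le r sigma n -> forces_in le r tau n ->
    forces_in le r rho n.

Definition empty_name (T : Type) : name T := fun _ _ => False.
Definition check_name (T : Type) (X : nat -> Prop) : name T := fun n _ => X n.
Definition compl_name (T : Type) (le : T -> T -> Prop) (sigma : name T) : name T :=
  fun n s => forall a, sigma n a -> ~ compat le s a.
(** the name for { m | q_m \in G } *)
Definition generic_name (T : Type) (q : nat -> T) : name T := fun n s => s = q n.

(** [U sigma p] is to be read "p ||- sigma \in D'".  The following says
    that U is the forcing relation of the atomic formula "sigma \in D'" for a
    P-name D' of an ultrafilter on omega extending D. *)
Definition ultrafilter_name_ext (T : Type) (le : T -> T -> Prop)
    (D : (nat -> Prop) -> Prop) (U : name T -> T -> Prop) : Prop :=
  (forall sigma p r, U sigma p -> le r p -> U sigma r) /\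
  (forall sigma p, dense_below le p (U sigma) -> U sigma p) /\
  (* upward closed (also gives extensionality) *)
  (forall sigma tau p, U sigma p -> forces_sub le p sigma tau -> U tau p) /\
  (forall sigma tau rho p, U sigma p -> U tau p -> forces_sub2 le p sigma tau rho ->
       U rho p) /\
  (forall p, ~ U (@empty_name T) p) /\
  (forall sigma p, dense_below le p (fun r => U sigma r \/ U (compl_name le sigma) r)) /\
  (forall X p, D X -> U (@check_name T X) p).

Definition star_n (T : Type) (le : T -> T -> Prop) (Q : T -> Prop)
    (D : (nat -> Prop) -> Prop) (lim : (nat -> T) -> T) (n : nat) : Prop :=
  forall qs : nat -> nat -> T,
    (forall j m, j < n -> Q (qs j m)) ->
    forall r : T, (forall j, j < n -> le r (lim (qs j))) ->
    D (fun m => exists s, le s r /\ forall j, j < n -> le s (qs j m)).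

Definition suff_D_lim_linked_by (T : Type) (le : T -> T -> Prop) (Q : T -> Prop)
    (D : (nat -> Prop) -> Prop) (lim : (nat -> T) -> T) : Prop :=
  forall n, star_n le Q D lim n.

Definition D_lim_linked_by (T : Type) (le : T -> T -> Prop) (Q : T -> Prop)
    (D : (nat -> Prop) -> Prop) (lim : (nat -> T) -> T) : Prop :=
  exists U : name T -> T -> Prop,
    ultrafilter_name_ext le D U /\
    forall q : nat -> T, (forall m, Q (q m)) -> U (generic_name q) (lim q).

Definition suff_uf_lim_linked (T : Type) (le : T -> T -> Prop) (Q : T -> Prop) : Prop :=
  forall D, ultrafilter D -> nonprincipal D ->
    exists lim, suff_D_lim_linked_by le Q D lim.

Definition uf_lim_linked (T : Type) (le : T -> T -> Prop) (Q : T -> Prop) : Prop :=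
  forall D, ultrafilter D -> nonprincipal D ->
    exists lim, D_lim_linked_by le Q D lim.

(* The forcing relation of "tau \in D'" is handled as a filter of names.  The
   sets of [D] together with the names {m | q m \in G}, placed below [lim q],
   generate such a filter, and it is proper precisely by the conditions
   (star)_n: a condition [s] below every [lim q^j] that forced
   [X \cap \bigcap_j {m | q^j m \in G}] to be empty would contradict that for
   D-many [m] some extension of [s] lies below all the [q^j m].  By Zorn's
   lemma this filter extends to a maximal one, and maximality yields the
   remaining properties: it is closed under density, and it decides every
   name [sigma] densely, since otherwise [sigma] could be adjoined below a
   condition where neither [sigma] nor its complement is forced. *)

From mathcomp Require Import boolp classical_sets.
From Stdlib Require Import Classical List.
Set Implicit Arguments.

Lemma ultrafilter_top (D : (nat -> Prop) -> Prop) : ultrafilter D -> D (fun _ => True).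
Proof.
  intros [D_up [_ [D_proper D_ultra]]].
  destruct (D_ultra (fun _ => False)) as [H | H]; [contradiction | eapply D_up; eauto].
Qed.

Lemma ultrafilter_inhabited (D : (nat -> Prop) -> Prop) X :
  ultrafilter D -> D X -> exists m, X m.
Proof.
  intros [D_up [_ [D_proper _]]] HX. apply NNPP. intros Hno.
  apply D_proper. eapply D_up; [exact HX |]. intros m Xm. apply Hno. eauto.
Qed.

Section NameFilters.
Variables (T : Type) (le : T -> T -> Prop).
Hypothesis le_refl : forall p, le p p.
Hypothesis le_trans : forall p q r, le p q -> le q r -> le p r.

Lemma dense_below_le p r X : dense_below le p X -> le r p -> dense_below le r X.
Proof. intros H hrp s hsr. apply H. eauto. Qed.

Lemma dense_below_mono p (X Y : T -> Prop) :
  (forall s, X s -> Y s) -> dense_below le p X -> dense_below le p Y.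
Proof. intros HXY H r hr. destruct (H r hr) as [s [hsr Xs]]. eauto. Qed.

Lemma dense_below_dense p X :
  dense_below le p (fun r => dense_below le r X) -> dense_below le p X.
Proof.
  intros H r hr. destruct (H r hr) as [s [hsr Hs]].
  destruct (Hs s (le_refl s)) as [t [hts Xt]]. eauto.
Qed.

Lemma forces_in_le p r sigma n :
  forces_in le p sigma n -> le r p -> forces_in le r sigma n.
Proof. apply dense_below_le. Qed.

Lemma forces_sub_le p r sigma tau :
  forces_sub le p sigma tau -> le r p -> forces_sub le r sigma tau.
Proof. intros H hrp n s hsr. apply H. eauto. Qed.

Lemma forces_sub2_le p r sigma tau rho :
  forces_sub2 le p sigma tau rho -> le r p -> forces_sub2 le r sigma tau rho.
Proof. intros H hrp n s hsr. apply H. eauto. Qed.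

Lemma not_forces_in_empty p n : ~ forces_in le p (@empty_name T) n.
Proof. intros H. destruct (H p (le_refl p)) as [_ [_ [_ [[] _]]]]. Qed.

Lemma forces_in_check (X : nat -> Prop) p n : X n -> forces_in le p (check_name X) n.
Proof. intros Xn r hr. exists r. split; [apply le_refl |]. exists r. auto. Qed.

Lemma forces_in_generic (q : nat -> T) p n : le p (q n) -> forces_in le p (generic_name q) n.
Proof.
  intros H r hr. exists r. split; [apply le_refl |]. exists (q n). split; [reflexivity | eauto].
Qed.

Definition meet_name (sigma tau : name T) : name T :=
  fun n s => forces_in le s sigma n /\ forces_in le s tau n.

Lemma forces_in_meet_name p sigma tau n :
  forces_in le p (meet_name sigma tau) n <-> forces_in le p sigma n /\ forces_in le p tau n.
Proof.
  split.
  - intros H. split; apply dense_below_dense; (eapply dense_below_mono; [| exact H]);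
      intros s [a [[Ha Hb] hsa]]; eapply forces_in_le; eauto.
  - intros [Hs Ht] r hr. exists r. split; [apply le_refl |]. exists r.
    split; [split; eapply forces_in_le; eauto | apply le_refl].
Qed.

Lemma forces_sub_compl_name t sigma rho :
  forces_sub2 le t sigma rho (@empty_name T) -> forces_sub le t rho (compl_name le sigma).
Proof.
  intros H n r hrt Hrho s hsr.
  destruct (classic (exists2 b, sigma n b & compat le s b)) as [[b Hb [w [hws hwb]]] | Hno].
  - exfalso. apply (@not_forces_in_empty w n). apply H; [eauto | | eapply forces_in_le; eauto].
    intros x hxw. exists x. split; [apply le_refl |]. exists b. eauto.
  - exists s. split; [apply le_refl |]. exists s. split; [| apply le_refl].
    intros a Ha Hc. apply Hno. eauto.
Qed.

(* [U tau p] reads "p forces tau \in F" for a name F of a filter on omega. *)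
Record is_name_filter (U : name T -> T -> Prop) : Prop := {
  name_filter_le : forall tau p r, U tau p -> le r p -> U tau r;
  name_filter_sub : forall sigma tau p, U sigma p -> forces_sub le p sigma tau -> U tau p;
  name_filter_meet : forall sigma tau rho p,
    U sigma p -> U tau p -> forces_sub2 le p sigma tau rho -> U rho p;
  name_filter_proper : forall p, ~ U (@empty_name T) p }.

Definition rel_incl (U W : name T -> T -> Prop) : Prop := forall tau p, U tau p -> W tau p.

Lemma rel_incl_refl U : rel_incl U U.
Proof. intros tau p H. exact H. Qed.

Definition maximal_name_filter (U : name T -> T -> Prop) : Prop :=
  is_name_filter U /\ forall W, is_name_filter W -> rel_incl U W -> rel_incl W U.

Lemma name_filter_directed_union (F : (name T -> T -> Prop) -> Prop) :
  (forall U, F U -> is_name_filter U) ->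
  (forall U W, F U -> F W -> exists V, F V /\ rel_incl U V /\ rel_incl W V) ->
  is_name_filter (fun tau p => exists2 U, F U & U tau p).
Proof.
  intros HF Hdir. split.
  - intros tau p r [U FU HU] hrp. exists U; [| eapply name_filter_le]; eauto.
  - intros sigma tau p [U FU HU] Hsub. exists U; [| eapply name_filter_sub]; eauto.
  - intros sigma tau rho p [U FU HU] [W FW HW] Hsub.
    destruct (Hdir U W FU FW) as [V [FV [UV WV]]].
    exists V; [exact FV | exact (name_filter_meet (HF V FV) (UV _ _ HU) (WV _ _ HW) Hsub)].
  - intros p [U FU HU]. exact (name_filter_proper (HF U FU) p HU).
Qed.

Lemma name_filter_chain_bound G (C : (name T -> T -> Prop) -> Prop) :
  is_name_filter G -> (forall U, C U -> is_name_filter U /\ rel_incl G U) ->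
  (forall U W, C U -> C W -> rel_incl U W \/ rel_incl W U) ->
  exists V, (is_name_filter V /\ rel_incl G V) /\ forall U, C U -> rel_incl U V.
Proof.
  intros HG HC C_chain.
  pose (F := fun W => W = G \/ C W).
  assert (F_G : forall W, F W -> is_name_filter W /\ rel_incl G W)
    by (intros W [-> | CW]; [split; [exact HG | apply rel_incl_refl] | exact (HC W CW)]).
  assert (F_directed : forall U W, F U -> F W -> exists V, F V /\ rel_incl U V /\ rel_incl W V).
  { intros U W FU FW.
    destruct FU as [-> | CU].
    { exists W. repeat split; [exact FW | apply F_G, FW | apply rel_incl_refl]. }
    destruct FW as [-> | CW].
    { exists U. repeat split; [right; exact CU | apply rel_incl_refl | apply HC, CU]. }
    destruct (C_chain U W CU CW) as [UW | WU].
    - exists W. repeat split; [right; exact CW | exact UW | apply rel_incl_refl].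
    - exists U. repeat split; [right; exact CU | apply rel_incl_refl | exact WU]. }
  exists (fun tau p => exists2 W, F W & W tau p). split; [split |].
  - apply name_filter_directed_union; [apply F_G | exact F_directed].
  - intros tau p H. exists G; [left; reflexivity | exact H].
  - intros U CU tau p H. exists U; [right; exact CU | exact H].
Qed.

Lemma exists_maximal_name_filter G :
  is_name_filter G -> exists U, rel_incl G U /\ maximal_name_filter U.
Proof.
  intros HG.
  pose (E := {U | is_name_filter U /\ rel_incl G U}).
  pose (R := fun U W : E => asbool (rel_incl (proj1_sig U) (proj1_sig W))).
  assert (G_E : is_name_filter G /\ rel_incl G G) by (split; [exact HG | apply rel_incl_refl]).
  destruct (@ZL_preorder E (exist _ G G_E) R) as [[U [HU GU]] Umax].
  - intros U. apply asboolT, rel_incl_refl.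
  - intros U V W HUV HVW. apply asboolT. intros tau p H. apply (asboolW HVW), (asboolW HUV), H.
  - intros A A_chain.
    destruct (@name_filter_chain_bound G (fun W => exists2 U : E, A U & proj1_sig U = W) HG)
      as [V [V_E V_bound]].
    + intros W [U _ <-]. exact (proj2_sig U).
    + intros U W [U' AU' <-] [W' AW' <-].
      destruct (A_chain U' W' AU' AW') as [H | H]; apply asboolW in H; auto.
    + exists (exist _ V V_E). intros U AU. apply asboolT, V_bound. eauto.
  - exists U. split; [exact GU | split; [exact HU |]].
    intros W HW UW.
    assert (GW : rel_incl G W) by (intros tau p H; apply UW, GU, H).
    exact (asboolW (Umax (exist _ W (conj HW GW)) (asboolT UW))).
Qed.

Definition dense_closure (U : name T -> T -> Prop) tau p : Prop := dense_below le p (U tau).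

Lemma dense_closure_name_filter U : is_name_filter U -> is_name_filter (dense_closure U).
Proof.
  intros HU. split.
  - intros tau p r H hrp. eapply dense_below_le; eauto.
  - intros sigma tau p H Hsub r hrp. destruct (H r hrp) as [s [hsr Hs]].
    exists s. split; [exact hsr |].
    eapply name_filter_sub; [exact HU | exact Hs | eapply forces_sub_le; eauto].
  - intros sigma tau rho p Hs Ht Hsub r hrp.
    destruct (Hs r hrp) as [s [hsr Hss]]. destruct (Ht s (le_trans hsr hrp)) as [t [hts Htt]].
    exists t. split; [eauto |].
    exact (name_filter_meet HU (name_filter_le HU _ Hss hts) Htt
             (forces_sub2_le Hsub (le_trans hts (le_trans hsr hrp)))).
  - intros p H. destruct (H p (le_refl p)) as [s [_ Hs]]. exact (name_filter_proper HU s Hs).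
Qed.

Lemma rel_incl_dense_closure U : is_name_filter U -> rel_incl U (dense_closure U).
Proof.
  intros HU tau p H r hrp. exists r. split; [apply le_refl | eapply name_filter_le; eauto].
Qed.

Section Adjoin.
Variables (U : name T -> T -> Prop) (sigma : name T) (r : T).
Hypothesis U_filter : is_name_filter U.
Hypothesis U_at_r : exists rho, U rho r.
Hypothesis no_compl_below_r : forall s, le s r -> ~ U (compl_name le sigma) s.

Definition adjoin tau t : Prop :=
  U tau t \/ (le t r /\ exists2 rho, U rho t & forces_sub2 le t sigma rho tau).

Lemma adjoin_below tau t :
  le t r -> adjoin tau t -> exists2 rho, U rho t & forces_sub2 le t sigma rho tau.
Proof.
  intros htr [H | [_ H]]; [| exact H].
  exists tau; [exact H | intros n x _ _ Htau; exact Htau].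
Qed.

Lemma adjoin_name_filter : is_name_filter adjoin.
Proof.
  split.
  - intros tau p t [H | [hpr [rho Hrho Hsub]]] htp; [left; eapply name_filter_le; eauto | right].
    split; [eauto |]. exists rho; [eapply name_filter_le | eapply forces_sub2_le]; eauto.
  - intros a b p [H | [hpr [rho Hrho Hsub]]] Hab; [left; eapply name_filter_sub; eauto | right].
    split; [exact hpr |]. exists rho; [exact Hrho |].
    intros n x hxp Hs Hr. apply Hab; [exact hxp | apply Hsub; auto].
  - intros a b c p Ha Hb Habc.
    assert (Hcases : (U a p /\ U b p) \/ le p r)
      by (destruct Ha as [? | [? _]], Hb as [? | [? _]]; tauto).
    destruct Hcases as [[Ua Ub] | hpr].
    { left. exact (name_filter_meet U_filter Ua Ub Habc). }
    right. split; [exact hpr |].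
    destruct (adjoin_below hpr Ha) as [ra Ura Hra], (adjoin_below hpr Hb) as [rb Urb Hrb].
    exists (meet_name ra rb).
    + eapply name_filter_meet; [exact U_filter | exact Ura | exact Urb |].
      intros n x _ H1 H2. apply forces_in_meet_name. auto.
    + intros n x hxp Hs Hm. apply forces_in_meet_name in Hm as [H1 H2].
      apply Habc; [exact hxp | apply Hra | apply Hrb]; auto.
  - intros p [H | [hpr [rho Hrho Hsub]]]; [exact (name_filter_proper U_filter p H) |].
    apply (no_compl_below_r hpr).
    eapply name_filter_sub; [exact U_filter | exact Hrho | apply forces_sub_compl_name, Hsub].
Qed.

Lemma rel_incl_adjoin : rel_incl U adjoin.
Proof. intros tau p H. left. exact H. Qed.

Lemma adjoin_sigma : adjoin sigma r.
Proof.
  right. split; [apply le_refl |]. destruct U_at_r as [rho Hrho].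
  exists rho; [exact Hrho | intros n x _ Hs _; exact Hs].
Qed.

End Adjoin.

Lemma maximal_name_filter_dense U tau p :
  maximal_name_filter U -> dense_below le p (U tau) -> U tau p.
Proof.
  intros [HU Umax] H.
  exact (Umax _ (dense_closure_name_filter HU) (rel_incl_dense_closure HU) tau p H).
Qed.

Lemma maximal_name_filter_ultra U sigma p :
  maximal_name_filter U -> (forall q, exists rho, U rho q) ->
  dense_below le p (fun r => U sigma r \/ U (compl_name le sigma) r).
Proof.
  intros [HU Umax] U_total r hrp. apply NNPP. intros Hno.
  assert (no_compl : forall s, le s r -> ~ U (compl_name le sigma) s)
    by (intros s hsr H; apply Hno; exists s; auto).
  apply Hno. exists r. split; [apply le_refl | left].
  apply (Umax _ (@adjoin_name_filter U sigma r HU no_compl) (@rel_incl_adjoin U sigma r)).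
  apply adjoin_sigma, U_total.
Qed.

Lemma maximal_name_filter_ultrafilter_name_ext D U :
  maximal_name_filter U -> (forall q, exists rho, U rho q) ->
  (forall X p, D X -> U (check_name X) p) -> ultrafilter_name_ext le D U.
Proof.
  intros U_max U_total U_check. pose proof U_max as [HU _].
  repeat split.
  - exact (name_filter_le HU).
  - intros tau p. apply maximal_name_filter_dense, U_max.
  - exact (name_filter_sub HU).
  - exact (name_filter_meet HU).
  - exact (name_filter_proper HU).
  - intros sigma p. apply maximal_name_filter_ultra; [exact U_max | exact U_total].
  - exact U_check.
Qed.

Section LimFilter.
Variables (Q : T -> Prop) (D : (nat -> Prop) -> Prop) (lim : (nat -> T) -> T).
Hypothesis D_ultra : ultrafilter D.
Hypothesis lim_star : suff_D_lim_linked_by le Q D lim.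

Lemma star_list (l : list (nat -> T)) r :
  (forall q, In q l -> (forall m, Q (q m)) /\ le r (lim q)) ->
  D (fun m => exists2 s, le s r & forall q, In q l -> le s (q m)).
Proof.
  intros Hl. destruct D_ultra as [D_up _].
  pose (qs := fun j => nth j l (fun _ => r)).
  assert (Hqs : forall j, j < length l -> (forall m, Q (qs j m)) /\ le r (lim (qs j)))
    by (intros j hj; apply Hl, nth_In, hj).
  eapply D_up.
  - apply (@lim_star (length l) qs); intros; apply Hqs; assumption.
  - intros m [s [hsr Hs]]. exists s; [exact hsr |]. intros q Hq.
    destruct (In_nth l q (fun _ => r) Hq) as [j [hj <-]]. exact (Hs j hj).
Qed.

Definition lim_filter (tau : name T) (s : T) : Prop :=
  exists2 X, D X & exists l : list (nat -> T),
    (forall q, In q l -> (forall m, Q (q m)) /\ le s (lim q)) /\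
    forall m r, le r s -> X m -> (forall q, In q l -> forces_in le r (generic_name q) m) ->
      forces_in le r tau m.

Lemma lim_filter_check X p : D X -> lim_filter (check_name X) p.
Proof.
  intros HX. exists X; [exact HX |]. exists nil. split; [intros q [] |].
  intros m r _ Xm _. apply forces_in_check, Xm.
Qed.

Lemma lim_filter_generic q : (forall m, Q (q m)) -> lim_filter (generic_name q) (lim q).
Proof.
  intros Hq. exists (fun _ => True); [apply ultrafilter_top, D_ultra |].
  exists (q :: nil). split.
  - intros q' [<- | []]. split; [exact Hq | apply le_refl].
  - intros m r _ _ H. apply H. left. reflexivity.
Qed.

Lemma lim_filter_name_filter : is_name_filter lim_filter.
Proof.
  destruct D_ultra as [D_up [D_meet _]]. split.
  - intros tau p r [X HX [l [Hl Hf]]] hrp. exists X; [exact HX |]. exists l. split.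
    + intros q Hq. destruct (Hl q Hq). split; eauto.
    + intros m s hsr. apply Hf. eauto.
  - intros sigma tau p [X HX [l [Hl Hf]]] Hsub. exists X; [exact HX |]. exists l.
    split; [exact Hl |]. intros m r hrp Xm Hg. apply Hsub; auto.
  - intros a b c p [X1 HX1 [l1 [Hl1 Hf1]]] [X2 HX2 [l2 [Hl2 Hf2]]] Habc.
    exists (fun m => X1 m /\ X2 m); [auto |]. exists (l1 ++ l2). split.
    + intros q Hq. apply in_app_iff in Hq as [Hq | Hq]; auto.
    + intros m r hrp [X1m X2m] Hg. apply Habc; [exact hrp | apply Hf1 | apply Hf2]; auto;
        intros q Hq; apply Hg, in_app_iff; auto.
  - intros s [X HX [l [Hl Hf]]].
    destruct (ultrafilter_inhabited _ D_ultra (D_meet _ _ HX (@star_list l s Hl)))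
      as [m [Xm [t hts Ht]]].
    apply (@not_forces_in_empty t m). apply Hf; [exact hts | exact Xm |].
    intros q Hq. apply forces_in_generic, Ht, Hq.
Qed.

Lemma D_lim_linked_of_suff : D_lim_linked_by le Q D lim.
Proof.
  destruct (exists_maximal_name_filter lim_filter_name_filter) as [U [GU U_max]].
  exists U. split.
  - apply maximal_name_filter_ultrafilter_name_ext; [exact U_max | |].
    + intros p. exists (check_name (fun _ => True)).
      apply GU, lim_filter_check, ultrafilter_top, D_ultra.
    + intros X p HX. apply GU, lim_filter_check, HX.
  - intros q Hq. apply GU, lim_filter_generic, Hq.
Qed.

End LimFilter.

End NameFilters.

Theorem lemma3p27 (T : Type) (le : T -> T -> Prop) (Q : T -> Prop) :
  is_poset le ->
  (forall (D : (nat -> Prop) -> Prop) (lim : (nat -> T) -> T),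
      ultrafilter D -> nonprincipal D ->
      suff_D_lim_linked_by le Q D lim -> D_lim_linked_by le Q D lim) /\
  (suff_uf_lim_linked le Q -> uf_lim_linked le Q).
Proof.
  intros [le_refl [le_trans _]].
  assert (suff_D : forall D lim, ultrafilter D -> nonprincipal D ->
             suff_D_lim_linked_by le Q D lim -> D_lim_linked_by le Q D lim)
    by (intros D lim HD _ Hstar; exact (D_lim_linked_of_suff le_refl le_trans HD Hstar)).
  split; [exact suff_D |].
  intros Hsuff D HD HnD. destruct (Hsuff D HD HnD) as [lim Hlim].
  exists lim. exact (suff_D D lim HD HnD Hlim).
Qed.
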